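(* Let $X$ be a connected topological space and let $E$ be a $B_1$-retract of $X$. Then $E$ (with the subspace topology) is connected.
   Context: A function $f:X\to Y$ between topological spaces is a Baire-one function if it is the pointwise limit of a sequence of continuous functions $f_n:X\to Y$. A subset $E$ of $X$ (with the subspace topology) is a $B_1$-retract of $X$ if there exists a Baire-one function $r:X\to E$ with $r(x)=x$ for all $x\in E$. *)

From Stdlib Require Import Arith.

Record TopSpace := {
  carrier :> Type;
  is_open : (carrier -> Prop) -> Prop;
  open_full : is_open (fun _ => True);
  open_inter : forall U V, is_open U -> is_open V -> is_open (fun x => U x /\ V x);
  open_union : forall F : (carrier -> Prop) -> Prop,
      (forall U, F U -> is_open U) -> is_open (fun x => exists U, F U /\ U x)
}.

Definition sub_open (X : TopSpace) (E : X -> Prop) (V : {x : X | E x} -> Prop) : Prop :=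
  exists U : X -> Prop, is_open X U /\ forall y, V y <-> U (proj1_sig y).

Lemma sub_open_full (X : TopSpace) (E : X -> Prop) : sub_open X E (fun _ => True).
Proof. exists (fun _ => True); split; [apply open_full | tauto]. Qed.

Lemma sub_open_inter (X : TopSpace) (E : X -> Prop) U V :
  sub_open X E U -> sub_open X E V -> sub_open X E (fun x => U x /\ V x).
Proof.
  intros [U' [HU HU']] [V' [HV HV']].
  exists (fun x => U' x /\ V' x); split; [apply open_inter; auto|].
  intro y; rewrite HU', HV'; tauto.
Qed.

Lemma sub_open_union (X : TopSpace) (E : X -> Prop) (F : ({x : X | E x} -> Prop) -> Prop) :
  (forall U, F U -> sub_open X E U) -> sub_open X E (fun x => exists U, F U /\ U x).
Proof.
  intros HF.
  exists (fun x => exists U, (is_open X U /\ exists V, F V /\ forall y, V y <-> U (proj1_sig y)) /\ U x).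
  split.
  - apply open_union. intros U [H _]; exact H.
  - intro y; split.
    + intros [V [FV Vy]]. destruct (HF V FV) as [U [HU HUV]].
      exists U; split; [split; [exact HU| exists V; split; auto] | apply HUV; exact Vy].
    + intros [U [[HU [V [FV HUV]]] Uy]]. exists V; split; auto. apply HUV; exact Uy.
Qed.

Definition subspace (X : TopSpace) (E : X -> Prop) : TopSpace :=
  {| carrier := {x : X | E x};
     is_open := sub_open X E;
     open_full := sub_open_full X E;
     open_inter := sub_open_inter X E;
     open_union := sub_open_union X E |}.

Definition continuous (X Y : TopSpace) (f : X -> Y) : Prop :=
  forall V : Y -> Prop, is_open Y V -> is_open X (fun x => V (f x)).

Definition seq_converges (Y : TopSpace) (s : nat -> Y) (l : Y) : Prop :=
  forall V : Y -> Prop, is_open Y V -> V l -> exists N, forall n, N <= n -> V (s n).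

Definition baire_one (X Y : TopSpace) (f : X -> Y) : Prop :=
  exists fn : nat -> X -> Y,
    (forall n, continuous X Y (fn n)) /\
    (forall x, seq_converges Y (fun n => fn n x) (f x)).

Definition B1_retract (X : TopSpace) (E : X -> Prop) : Prop :=
  exists r : X -> subspace X E,
    baire_one X (subspace X E) r /\
    (forall x (hx : E x), proj1_sig (r x) = x).

Definition connected (X : TopSpace) : Prop :=
  forall U : X -> Prop, is_open X U -> is_open X (fun x => ~ U x) ->
    (forall x, ~ U x) \/ (forall x, U x).

(* A Baire-one map f from a connected space cannot separate a clopen set U:
   if f a is in U and f b is not, the continuous approximants f_n eventually
   do the same, so the clopen preimage of U under one f_n would be a proper
   nonempty clopen subset of X.  Applied to the retraction r, which fixes E
   pointwise, this makes every clopen subset of E trivial. *)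

From Stdlib Require Import Classical Lia.

Lemma connected_of_no_separation (X : TopSpace) :
  (forall U : X -> Prop, is_open X U -> is_open X (fun x => ~ U x) ->
     forall a b, U a -> ~ U b -> False) ->
  connected X.
Proof.
  intros Hsep U HU HUc.
  destruct (classic (exists a, U a)) as [[a Ua] | Hnone].
  - right; intros b; apply NNPP; intros Ub; exact (Hsep U HU HUc a b Ua Ub).
  - left; intros x Ux; apply Hnone; exists x; exact Ux.
Qed.

Lemma connected_continuous_clopen (X Y : TopSpace) (f : X -> Y) (U : Y -> Prop) :
  connected X -> continuous X Y f ->
  is_open Y U -> is_open Y (fun y => ~ U y) ->
  forall a b, U (f a) -> U (f b).
Proof.
  intros HX Hf HU HUc a b Ua.
  destruct (HX (fun x => U (f x)) (Hf U HU) (Hf _ HUc)) as [Hout | Hin].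
  - contradiction (Hout a Ua).
  - exact (Hin b).
Qed.

Lemma baire_one_clopen (X Y : TopSpace) (f : X -> Y) (U : Y -> Prop) :
  connected X -> baire_one X Y f ->
  is_open Y U -> is_open Y (fun y => ~ U y) ->
  forall a b, U (f a) -> U (f b).
Proof.
  intros HX [fn [Hcont Hlim]] HU HUc a b Ua.
  apply NNPP; intros Ub.
  destruct (Hlim a U HU Ua) as [Na Hna].
  destruct (Hlim b _ HUc Ub) as [Nb Hnb].
  apply (Hnb (Na + Nb)); [lia |].
  apply (connected_continuous_clopen X Y (fn (Na + Nb)) U HX (Hcont _) HU HUc a).
  apply Hna; lia.
Qed.

Lemma sub_open_proj1_sig (X : TopSpace) (E : X -> Prop) (V : {x : X | E x} -> Prop)
    (y z : {x : X | E x}) :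
  sub_open X E V -> proj1_sig y = proj1_sig z -> V y -> V z.
Proof.
  intros [U [_ HVU]] Hyz Vy.
  apply HVU; rewrite <- Hyz; apply HVU; exact Vy.
Qed.

Theorem proposition2p4 (X : TopSpace) (E : X -> Prop) :
  connected X -> B1_retract X E -> connected (subspace X E).
Proof.
  intros HX [r [Hr Hfix]].
  apply connected_of_no_separation; intros U HU HUc a b Ua Ub.
  assert (Hr_eq : forall y : subspace X E, proj1_sig (r (proj1_sig y)) = proj1_sig y)
    by (intros [x Ex]; exact (Hfix x Ex)).
  apply Ub.
  apply (sub_open_proj1_sig X E U _ _ HU (Hr_eq b)).
  apply (baire_one_clopen X (subspace X E) r U HX Hr HU HUc (proj1_sig a)).
  apply (sub_open_proj1_sig X E U a _ HU (eq_sym (Hr_eq a))).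
  exact Ua.
Qed.
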